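(* Let $\mathfrak{H}$ be a fat indecomposable Hoffman graph with $\lambda_{\min}(\mathfrak{H})\ge-1-\tau$, where $\tau=\frac{1+\sqrt5}{2}$, and with at most two slim vertices. Then $\mathfrak{H}$ is isomorphic to one of $\mathfrak{H}_{\rm I}$, $\mathfrak{H}_{\rm II}$, $\mathfrak{H}_{\rm III}$, $\mathfrak{H}_{\rm IV}$, $\mathfrak{H}_{\rm XVI}$, $\mathfrak{H}_{\rm XVII}$.
   Context: A Hoffman graph $\mathfrak{H}$ is a finite simple graph $H$ together with a labeling of each vertex as slim or fat, such that every fat vertex is adjacent to at least one slim vertex and the fat vertices are pairwise non-adjacent. $V^s(\mathfrak{H})$ denotes the set of slim vertices and $N^f_{\mathfrak{H}}(x)$ the set of fat neighbours of $x$. $\mathfrak{H}$ is fat if every slim vertex has a fat neighbour. Isomorphisms are graph isomorphisms preserving labels. An induced Hoffman subgraph is a Hoffman graph whose underlying graph is an induced subgraph with inherited labels. Writing the adjacency matrix of $H$ with fat vertices last as $\begin{pmatrix}A_s & C\\ C^T & O\end{pmatrix}$, set $B(\mathfrak{H})=A_s-CC^T$; $\lambda_{\min}(\mathfrak{H})$ is its smallest eigenvalue. A decomposition of $\mathfrak{H}$ is a family $\{\mathfrak{H}^i\}_{i=1}^n$ of induced Hoffman subgraphs such that: (i) $V(\mathfrak{H})=\bigcup_i V(\mathfrak{H}^i)$; (ii) slim vertex sets of distinct members are disjoint; (iii) if $x\in V^s(\mathfrak{H}^i)$ and $y$ is a fat neighbour of $x$ in $\mathfrak{H}$, then $y\in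 V(\mathfrak{H}^i)$; (iv) if $x\in V^s(\mathfrak{H}^i)$, $y\in V^s(\mathfrak{H}^j)$, $i\neq j$, then $|N^f_{\mathfrak{H}}(x)\cap N^f_{\mathfrak{H}}(y)|\le 1$, with equality iff $x,y$ are adjacent. $\mathfrak{H}$ is indecomposable if it has no decomposition with $n\ge 2$. Named Hoffman graphs (slim vertices $v_i$, fat vertices $f_j$): $\mathfrak{H}_{\rm I}$: slim $v_1$, fat $f_1$, edge $v_1f_1$. $\mathfrak{H}_{\rm II}$: slim $v_1$, fat $f_1,f_2$, edges $v_1f_1,v_1f_2$. $\mathfrak{H}_{\rm III}$: slim $v_1,v_2$, fat $f_1$, edges $v_1f_1,v_2f_1$. $\mathfrak{H}_{\rm IV}$: slim $v_1,v_2$, fat $f_1,f_2$, edges $v_1v_2,v_1f_1,v_2f_2$. $\mathfrak{H}_{\rm XVI}$: slim $v_1,v_2$, fat $f_1,f_2,f_3$, edges $v_1v_2,v_1f_1,v_1f_2,v_2f_3$. $\mathfrak{H}_{\rm XVII}$: slim $v_1,v_2$, fat $f_1,f_2$, edges $v_1f_1,v_1f_2,v_2f_2$. *)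

From HB Require Import structures.
From mathcomp Require Import all_boot all_order all_algebra all_field.
Set Implicit Arguments. Unset Strict Implicit. Unset Printing Implicit Defensive.
Import Order.TTheory GRing.Theory Num.Theory.

Definition is_hoffman (T : finType) (adj : rel T) (fat : pred T) : Prop :=
  [/\ (forall x y, adj x y = adj y x),
      (forall x, ~~ adj x x),
      (forall x y, fat x -> fat y -> ~~ adj x y) &
      (forall f, fat f -> (exists2 x, ~~ fat x & adj f x))].

Definition is_fat_hoffman (T : finType) (adj : rel T) (fat : pred T) : Prop :=
  forall x, ~~ fat x -> exists2 f, fat f & adj x f.

Definition slim_set (T : finType) (fat : pred T) : {set T} := [set x | ~~ fat x].

Definition fat_nbrs (T : finType) (adj : rel T) (fat : pred T) (x : T) : {set T} :=
  [set f | fat f && adj x f].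

(* B(H) = A_s - C C^T, indexed by the slim vertices (enumerated) *)
Definition Bmat (T : finType) (adj : rel T) (fat : pred T) :
    'M[int]_(#|slim_set fat|) :=
  \matrix_(i, j)
    ((adj (enum_val i) (enum_val j) : nat)%:Z
     - (#|fat_nbrs adj fat (enum_val i) :&: fat_nbrs adj fat (enum_val j)|)%:Z)%R.

Definition tau : algC := ((1 + sqrtC 5%:R) / 2%:R)%R.

(* lambda_min(H) >= c : every eigenvalue of B(H) (as a complex matrix) is >= c *)
Definition lambda_min_ge (T : finType) (adj : rel T) (fat : pred T) (c : algC) : Prop :=
  forall a : algC, eigenvalue (map_mx intr (Bmat adj fat)) a -> (c <= a)%R.

(* A decomposition with n members, given by their vertex sets V i
   (each member is the induced Hoffman subgraph on V i). *)
Definition is_decomposition (T : finType) (adj : rel T) (fat : pred T)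
    (n : nat) (V : 'I_n -> {set T}) : Prop :=
  [/\
      (forall i, V i != set0),
      (forall i f, f \in V i -> fat f -> (exists2 x, (x \in V i) && ~~ fat x & adj f x)) /\
      (forall x, exists i, x \in V i),
      (forall i j x, i != j -> x \in V i -> ~~ fat x -> x \notin V j),
      (forall i x y, x \in V i -> ~~ fat x -> fat y -> adj x y -> y \in V i) &
      (forall i j x y, i != j -> x \in V i -> ~~ fat x -> y \in V j -> ~~ fat y ->
           (#|fat_nbrs adj fat x :&: fat_nbrs adj fat y| <= 1)%N /\
           ((#|fat_nbrs adj fat x :&: fat_nbrs adj fat y| == 1%N) = adj x y))].

Definition indecomposable (T : finType) (adj : rel T) (fat : pred T) : Prop :=
  forall n (V : 'I_n -> {set T}), is_decomposition adj fat V -> (n < 2)%N.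

Definition hoffman_iso (T1 : finType) (adj1 : rel T1) (fat1 : pred T1)
    (T2 : finType) (adj2 : rel T2) (fat2 : pred T2) : Prop :=
  exists f : T1 -> T2, [/\ bijective f,
     (forall x y, adj2 (f x) (f y) = adj1 x y) &
     (forall x, fat2 (f x) = fat1 x)].

(* Concrete Hoffman graph on 'I_k: vertices 0..ns-1 slim, ns..k-1 fat,
   edges given by a list of (unordered) pairs. *)
Definition named_adj (k : nat) (es : seq (nat * nat)) : rel 'I_k :=
  fun x y => ((val x, val y) \in es) || ((val y, val x) \in es).
Definition named_fat (k ns : nat) : pred 'I_k := fun x => (ns <= val x)%N.

(* slim v1 = 0, v2 = 1 (when present); fat f1, f2, f3 follow *)
Definition es_I : seq (nat * nat) := [:: (0, 1)]%N.
Definition es_II : seq (nat * nat) := [:: (0, 1); (0, 2)]%N.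
Definition es_III : seq (nat * nat) := [:: (0, 2); (1, 2)]%N.
Definition es_IV : seq (nat * nat) := [:: (0, 1); (0, 2); (1, 3)]%N.
Definition es_XVI : seq (nat * nat) := [:: (0, 1); (0, 2); (0, 3); (1, 4)]%N.
Definition es_XVII : seq (nat * nat) := [:: (0, 2); (0, 3); (1, 3)]%N.

Definition iso_named (T : finType) (adj : rel T) (fat : pred T)
    (k ns : nat) (es : seq (nat * nat)) : Prop :=
  hoffman_iso adj fat (@named_adj k es) (@named_fat k ns).

From HB Require Import structures.
From mathcomp Require Import all_boot all_order all_algebra all_field.
From mathcomp Require Import ring zify.
Import Order.TTheory GRing.Theory Num.Theory.

Set Implicit Arguments. Unset Strict Implicit. Unset Printing Implicit Defensive.
Local Open Scope ring_scope.

(* Every vertex of a fat Hoffman graph is slim or a fat neighbour of a slim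
   vertex, so the graph is determined by its slim vertices, their mutual
   adjacency and their fat neighbourhoods N(x).
   - Spectral side: a nonzero weighting of the slim vertices satisfying the
     eigen-equations of B(H) yields an eigenvalue, and every eigenvalue lam
     satisfies 2 lam > 2 (-1 - tau) = -3 - sqrt 5 > -6.
   - One slim vertex u: B(H) = (-|N(u)|), hence |N(u)| <= 2.
   - Two slim vertices u, v: if |N(u) :&: N(v)| equals [adj u v] then the two
     stars {u} :|: N(u) and {v} :|: N(v) form a decomposition, so by
     indecomposability the off-diagonal entry Q of the 2x2 matrix B(H) is
     nonzero; its smaller eigenvalue is at most (B_uu + B_vv - 2|Q|) / 2,
     which forces |N(u)| + |N(v)| <= 3.
   - The few remaining configurations are matched with the named graphs by
     listing their vertices. *)

(* The number 2 (-1 - tau) = -3 - sqrt 5 lies strictly above -6. *)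
Lemma double_lambda_gt (lam : algC) : -1 - tau <= lam -> -6 < 2 * lam.
Proof.
move=> hlam; apply: lt_le_trans (ler_wpM2l (ler0n _ 2) hlam).
have -> : 2 * (-1 - tau) = - 3%:R - sqrtC 5 by rewrite /tau; field.
have sqrt5_lt3 : sqrtC 5 < 3%:R :> algC.
  rewrite -[(3%:R : algC)]sqrCK ?ler0n // ltr_sqrtC ?qualifE /= ?ler0n ?exprn_ge0 //.
  by rewrite -natrX ltr_nat.
rewrite -[-6]/(- 6%:R) -subr_gt0.
have -> : - 3%:R - sqrtC 5 - - 6%:R = 3%:R - sqrtC 5 :> algC by ring.
by rewrite subr_gt0.
Qed.

Lemma sym2_small_eigenvalue (P Q R : int) : exists lam : algC,
  [/\ Q%:~R * P%:~R + (lam - P%:~R) * Q%:~R = lam * Q%:~R,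
      Q%:~R * Q%:~R + (lam - P%:~R) * R%:~R = lam * (lam - P%:~R) &
      2 * lam <= (P + R - 2 * `|Q|)%:~R].
Proof.
set p : algC := P%:~R; set q : algC := Q%:~R; set r : algC := R%:~R.
set D : int := (P - R) ^+ 2 + 4 * Q ^+ 2.
set s := sqrtC (D%:~R : algC).
have s2 : s ^+ 2 = (p - r) ^+ 2 + 4 * q ^+ 2.
  by rewrite sqrtCK /D rmorphD rmorphM !rmorphXn /= rmorphB.
exists ((p + r - s) / 2); split.
- by field.
- apply/eqP; rewrite -subr_eq0.
  have -> : q * q + ((p + r - s) / 2 - p) * r - (p + r - s) / 2 * ((p + r - s) / 2 - p)
     = ((p - r) ^+ 2 + 4 * q ^+ 2 - s ^+ 2) / 4 by field.
  by rewrite s2 subrr mul0r.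
- have sqrD_ge : (2 * `|Q|) ^+ 2 <= D.
    by rewrite /D exprMn real_normK ?num_real // lerDr sqr_ge0.
  have twoQ_le_s : (2 * `|Q|)%:~R <= s.
    rewrite -[X in X <= _]sqrCK ?ler0z ?mulr_ge0 // ler_sqrtC ?qualifE /=
      ?exprn_ge0 ?ler0z ?mulr_ge0 //; last exact: le_trans (sqr_ge0 _) sqrD_ge.
    by rewrite -rmorphXn /= ler_int.
  rewrite mulrC divfK ?pnatr_eq0 // rmorphB /= rmorphD /= -/p -/r.
  by rewrite lerD2l lerN2.
Qed.

Lemma double_lambda_gt_int (lam : algC) (z : int) :
  -1 - tau <= lam -> 2 * lam <= z%:~R -> -6 < z.
Proof.
move=> /double_lambda_gt lt6 le_z.
by rewrite -(ltr_int algC) rmorphN; apply: lt_le_trans le_z.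
Qed.

Lemma iso_of_listing (T : finType) (adj : rel T) (fat : pred T) k ns es
    (s : seq T) (x0 : T) :
  size s = k -> uniq s -> (forall x, x \in s) ->
  (forall i j : 'I_k, adj (nth x0 s i) (nth x0 s j) = named_adj es i j) ->
  (forall i : 'I_k, fat (nth x0 s i) = named_fat ns i) ->
  iso_named adj fat k ns es.
Proof.
move=> size_s uniq_s all_s adjE fatE.
have index_lt x : (index x s < k)%N by rewrite -size_s index_mem.
have nth_index_ord x : nth x0 s (Ordinal (index_lt x)) = x by rewrite nth_index.
exists (fun x => Ordinal (index_lt x)); split.
- exists (fun i : 'I_k => nth x0 s i) => [x|i]; first exact: nth_index_ord.
  by apply: val_inj; rewrite /= index_uniq // size_s.
- by move=> x y; rewrite -adjE !nth_index_ord.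
- by move=> x; rewrite -fatE nth_index_ord.
Qed.

Lemma card_setI1 (T : finType) (A : {set T}) g :
  #|A :&: [set g]| = (g \in A) :> nat.
Proof.
have [gA | gNA] := boolP (g \in A); first by rewrite (setIidPr _) ?cards1 ?sub1set.
by apply/eqP; rewrite cards_eq0 setI_eq0 disjoint_sym disjoints1.
Qed.

Section HoffmanGraph.

Variables (T : finType) (adj : rel T) (fat : pred T).
Local Notation N := (fat_nbrs adj fat).

Lemma fat_nbrsP x f : reflect (fat f /\ adj x f) (f \in N x).
Proof. by rewrite inE; apply: andP. Qed.

Definition Bentry (x y : T) : algC :=
  ((adj x y : nat)%:Z - #|N x :&: N y|%:Z)%:~R.

Lemma eigenvalue_of_weights (w : T -> algC) (lam : algC) :
  (exists2 x, ~~ fat x & w x != 0) ->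
  (forall y, ~~ fat y -> \sum_(x in slim_set fat) w x * Bentry x y = lam * w y) ->
  eigenvalue (map_mx intr (Bmat adj fat)) lam.
Proof.
move=> [x0 slim_x0 w_x0] eqn; apply/eigenvalueP; exists (\row_j w (enum_val j)).
  apply/rowP => j; rewrite !mxE.
  have slim_j : ~~ fat (enum_val j) by have := enum_valP j; rewrite inE.
  rewrite -eqn // [RHS]big_enum_val; apply: eq_bigr => i _; by rewrite !mxE.
have x0S : x0 \in slim_set fat by rewrite inE.
apply/negP => /eqP/rowP/(_ (enum_rank_in x0S x0)).
by rewrite !mxE enum_rankK_in //; apply/eqP.
Qed.

Lemma fat_nbrs_pos x : is_fat_hoffman adj fat -> ~~ fat x -> (0 < #|N x|)%N.
Proof.
by move=> fatH /fatH[f fat_f adj_xf]; apply/card_gt0P; exists f; apply/fat_nbrsP.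
Qed.

Hypothesis hoffH : is_hoffman adj fat.

Lemma adjC x y : adj x y = adj y x.
Proof. by case: hoffH. Qed.

Lemma adj_irr x : ~~ adj x x.
Proof. by case: hoffH. Qed.

Lemma fat_nonadj x y : fat x -> fat y -> ~~ adj x y.
Proof. by case: hoffH => _ _ indep _; apply: indep. Qed.

Lemma Bentry_sym x y : Bentry x y = Bentry y x.
Proof. by rewrite /Bentry adjC setIC. Qed.

Lemma Bentry_diag x : Bentry x x = (- #|N x|%:Z)%:~R.
Proof. by rewrite /Bentry (negbTE (adj_irr x)) setIid sub0r. Qed.

Lemma exists_slim : (0 < #|T|)%N -> exists x, ~~ fat x.
Proof.
case/card_gt0P => x _; have [fat_x | slim_x] := boolP (fat x); last by exists x.
by case: hoffH => _ _ _ /(_ x fat_x) [y slim_y _]; exists y.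
Qed.

Lemma fat_in_nbrs f : fat f -> exists2 x, ~~ fat x & f \in N x.
Proof.
move=> fat_f; case: hoffH => _ _ _ /(_ f fat_f) [x slim_x adj_fx]; exists x => //.
by apply/fat_nbrsP; rewrite adjC.
Qed.

Lemma nbrs_mem x A y : N x = A -> y \in A -> fat y /\ adj x y.
Proof. by move=> <- /fat_nbrsP. Qed.

Lemma nbrs_nonadj x A y : N x = A -> fat y -> y \notin A -> ~~ adj x y.
Proof. by move=> <- fat_y; apply: contra => adj_xy; apply/fat_nbrsP. Qed.

Lemma fat_neq x y : fat x -> ~~ fat y -> x != y.
Proof. by move=> fat_x; apply: contraNneq => <-. Qed.

Lemma listing_complete (s : seq T) :
  (forall x, ~~ fat x -> x \in s) -> (forall x, ~~ fat x -> {subset N x <= s}) ->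
  forall y, y \in s.
Proof.
move=> slim_s nbrs_s y; case fat_y: (fat y); last by rewrite slim_s ?fat_y.
by have [x slim_x] := fat_in_nbrs fat_y; apply: nbrs_s.
Qed.

End HoffmanGraph.

(* Tactics discharging the hypotheses of [iso_of_listing] for an explicit list
   of at most five vertices from the adjacency and fatness facts in the
   context: distinctness, adjacency of each pair, and fatness of each entry.
   (The listing is complete by a separate argument.) *)
Ltac listing_uniq :=
  rewrite /= !inE ?negb_or ?andbT -?andbA; repeat (apply/andP; split);
  first [ assumption | rewrite eq_sym; assumption
        | match goal with
          | fx : is_true (?fat ?x), fy : is_true (~~ ?fat ?y) |- is_true (?x != ?y) =>
              exact: fat_neq fx fy
          | fx : is_true (?fat ?x), fy : is_true (~~ ?fat ?y) |- is_true (?y != ?x) =>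
              rewrite eq_sym; exact: fat_neq fx fy
          end ].

Ltac listing_adj adjC adj_irr fat_nonadj :=
  move=> [[|[|[|[|[|i]]]]] lt_i] [[|[|[|[|[|j]]]]] lt_j]; try by [];
  rewrite /named_adj /es_I /es_II /es_III /es_IV /es_XVI /es_XVII /= ?in_cons ?in_nil /=;
  lazymatch goal with
  | |- _ = true => first [ assumption | rewrite adjC; assumption ]
  | |- _ = false => apply/negbTE;
      first [ assumption | rewrite adjC; assumption | exact: adj_irr
            | by apply: fat_nonadj ]
  end.

Ltac listing_fat :=
  move=> [[|[|[|[|[|i]]]]] lt_i]; try by [];
  rewrite /named_fat /=; first [ apply/negbTE; assumption | by apply/esym ].

Section Classification.

Variables (T : finType) (adj : rel T) (fat : pred T).
Hypothesis hoffH : is_hoffman adj fat.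
Local Notation N := (fat_nbrs adj fat).

Section OneSlim.

Variable u : T.
Hypothesis slimE : slim_set fat = [set u].

Lemma one_slim x : ~~ fat x -> x = u.
Proof. by move=> slim_x; apply/set1P; rewrite -slimE inE. Qed.

Lemma one_slim_u : ~~ fat u.
Proof. by have := set11 u; rewrite -slimE inE. Qed.

(* The 1x1 matrix B(H) = (-|N(u)|) has eigenvalue -|N(u)| >= -1 - tau. *)
Lemma one_slim_nbrs : lambda_min_ge adj fat (-1 - tau) -> (#|N u| <= 2)%N.
Proof.
move=> lam_ge.
have eig_u : eigenvalue (map_mx intr (Bmat adj fat)) (Bentry adj fat u u).
  apply: (eigenvalue_of_weights (w := fun _ => 1)).
    by exists u; rewrite ?oner_eq0 ?one_slim_u.
  by move=> y /one_slim ->; rewrite slimE big_set1 mul1r mulr1.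
have := double_lambda_gt_int (lam_ge _ eig_u) (z := 2 * - #|N u|%:Z).
by rewrite (Bentry_diag hoffH) rmorphM lexx; lia.
Qed.

Lemma one_slim_complete (s : seq T) :
  u \in s -> {subset N u <= s} -> forall y, y \in s.
Proof. by move=> su Nu; apply: (listing_complete hoffH) => // x /one_slim ->. Qed.

Lemma iso_I f : N u = [set f] -> iso_named adj fat 2 1 es_I.
Proof.
move=> Nu; have [fat_f adj_uf] := nbrs_mem Nu (set11 f).
have slim_u := one_slim_u.
apply: (@iso_of_listing _ _ _ _ _ _ [:: u; f] u) => //.
- listing_uniq.
- apply: one_slim_complete; first by rewrite inE eqxx.
  by rewrite Nu => y /set1P ->; rewrite !inE eqxx orbT.
- listing_adj (adjC hoffH) (adj_irr hoffH) (fat_nonadj hoffH).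
- listing_fat.
Qed.

Lemma iso_II f1 f2 : N u = [set f1; f2] -> f1 != f2 -> iso_named adj fat 3 1 es_II.
Proof.
move=> Nu f12; have [fat_f1 adj_uf1] := nbrs_mem Nu (set21 f1 f2).
have [fat_f2 adj_uf2] := nbrs_mem Nu (set22 f1 f2).
have slim_u := one_slim_u.
apply: (@iso_of_listing _ _ _ _ _ _ [:: u; f1; f2] u) => //.
- listing_uniq.
- apply: one_slim_complete; first by rewrite inE eqxx.
  by rewrite Nu => y /set2P[] ->; rewrite !inE eqxx ?orbT.
- listing_adj (adjC hoffH) (adj_irr hoffH) (fat_nonadj hoffH).
- listing_fat.
Qed.

Lemma one_slim_iso :
  (0 < #|N u| <= 2)%N -> iso_named adj fat 2 1 es_I \/ iso_named adj fat 3 1 es_II.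
Proof.
move=> Nu_12; have /orP[/cards1P [f Nu] | /cards2P [f1 [f2 [f12 Nu]]]] :
  (#|N u| == 1) || (#|N u| == 2) by apply/orP; lia.
- by left; apply: iso_I Nu.
- by right; apply: iso_II Nu f12.
Qed.

End OneSlim.

Definition star (x : T) : {set T} := x |: N x.

Lemma star_slim x y : ~~ fat y -> y \in star x -> y = x.
Proof.
by move=> slim_y /setU1P[// | /fat_nbrsP[fat_y _]]; move: slim_y; rewrite fat_y.
Qed.

Section TwoSlim.

Variables u v : T.
Hypotheses (uv : u != v) (slimE : slim_set fat = [set u; v]).

Lemma two_slim x : ~~ fat x -> x = u \/ x = v.
Proof. by move=> slim_x; apply/set2P; rewrite -slimE inE. Qed.

Lemma two_slim_u : ~~ fat u.
Proof. by have := set21 u v; rewrite -slimE inE. Qed.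

Lemma two_slim_v : ~~ fat v.
Proof. by have := set22 u v; rewrite -slimE inE. Qed.

Lemma two_slim_complete (s : seq T) :
  u \in s -> v \in s -> {subset N u <= s} -> {subset N v <= s} -> forall y, y \in s.
Proof.
by move=> su sv Nu Nv; apply: (listing_complete hoffH) => x /two_slim[] ->.
Qed.

(* If |N(u) :&: N(v)| = [adj u v], the two stars satisfy condition (iv) of a
   decomposition, hence form a decomposition of H. *)
Lemma two_stars_decomposition :
  #|N u :&: N v| = adj u v ->
  is_decomposition adj fat (fun i : 'I_2 => star (if val i == 0 then u else v)).
Proof.
move=> meet_uv; set c := fun i : 'I_2 => if val i == 0 then u else v.
have slim_c i : ~~ fat (c i).
  by rewrite /c; case: ifP => _; [exact: two_slim_u | exact: two_slim_v].
have c_onto y : ~~ fat y -> exists i, c i = y.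
  by case/two_slim => ->; [exists ord0 | exists (Ordinal (isT : (1 < 2)%N))].
have c_pair i j : i != j -> (c i = u /\ c j = v) \/ (c i = v /\ c j = u).
  by case: i j => [[|[|i]] lt_i] [[|[|j]] lt_j]; rewrite /c //=; auto.
have in_star x i : x \in star (c i) -> ~~ fat x -> x = c i.
  by move=> /[swap]; apply: star_slim.
split.
- by move=> i; apply/set0Pn; exists (c i); rewrite setU11.
- split.
    move=> i f /setU1P[-> fat_c | /fat_nbrsP[_ adj_cf] _].
      by case/negP: (slim_c i).
    by exists (c i); rewrite ?setU11 ?slim_c // (adjC hoffH).
  move=> x; have [fat_x | slim_x] := boolP (fat x).
    have [y /c_onto[i <-] x_Ny] := fat_in_nbrs hoffH fat_x.
    by exists i; rewrite setU1r.
  by have [i <-] := c_onto x slim_x; exists i; rewrite setU11.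
- move=> i j x ij /in_star x_ci /x_ci ->.
  apply: contraNN uv => /in_star/(_ (slim_c i)).
  by case: (c_pair i j ij) => -[-> ->] // ->.
- by move=> i x y /in_star x_ci /x_ci -> fat_y adj_xy; apply/setU1r/fat_nbrsP.
- move=> i j x y ij /in_star x_ci /x_ci -> /in_star y_cj /y_cj ->.
  have iv_uv : (#|N u :&: N v| <= 1)%N /\ ((#|N u :&: N v| == 1) = adj u v).
    by rewrite meet_uv; case: (adj u v).
  by case: (c_pair i j ij) => -[-> ->]; rewrite // setIC (adjC hoffH).
Qed.

(* Indecomposability thus forces the entry Q = [adj u v] - |N(u) :&: N(v)|
   of B(H) to be nonzero. *)
Lemma two_slim_meet : indecomposable adj fat -> #|N u :&: N v| != adj u v.
Proof. by move=> indec; apply/eqP => /two_stars_decomposition /indec. Qed.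

(* The 2x2 matrix B(H) = [[-|N(u)|, Q], [Q, -|N(v)|]] with Q <> 0 has an
   eigenvalue lam with 2 lam <= -|N(u)| - |N(v)| - 2; lam > -1 - tau then
   gives |N(u)| + |N(v)| <= 3. *)
Lemma two_slim_nbrs :
  lambda_min_ge adj fat (-1 - tau) -> #|N u :&: N v| != adj u v ->
  (#|N u| + #|N v| <= 3)%N.
Proof.
move=> lam_ge meet_uv.
set Q : int := (adj u v : nat)%:Z - #|N u :&: N v|%:Z.
have Q_neq0 : Q != 0 by rewrite /Q; move: meet_uv; case: (adj u v); lia.
have [lam [eqn_u eqn_v lam_le]] :=
  sym2_small_eigenvalue (- #|N u|%:Z) Q (- #|N v|%:Z).
have eig_lam : eigenvalue (map_mx intr (Bmat adj fat)) lam.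
  apply: (eigenvalue_of_weights
           (w := fun x => if x == u then Q%:~R else lam - (- #|N u|%:Z)%:~R)).
    by exists u; rewrite ?two_slim_u // eqxx intr_eq0.
  have Bentry_uv : Bentry adj fat u v = Q%:~R by [].
  have vu : (v == u) = false by rewrite eq_sym (negbTE uv).
  move=> y /two_slim[] ->; rewrite slimE big_setU1 ?inE //= big_set1 eqxx vu
    !(Bentry_diag hoffH) ?(Bentry_sym hoffH v u) Bentry_uv //.
have := double_lambda_gt_int (lam_ge _ eig_lam) lam_le.
have : 0 < `|Q| by rewrite normr_gt0.
lia.
Qed.

Lemma iso_III f : N u = [set f] -> N v = [set f] -> ~~ adj u v ->
  iso_named adj fat 3 2 es_III.
Proof.
move=> Nu Nv nadj_uv; have [fat_f adj_uf] := nbrs_mem Nu (set11 f).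
have [_ adj_vf] := nbrs_mem Nv (set11 f).
have [slim_u slim_v] := (two_slim_u, two_slim_v).
apply: (@iso_of_listing _ _ _ _ _ _ [:: u; v; f] u) => //.
- listing_uniq.
- apply: two_slim_complete; rewrite ?inE ?eqxx ?orbT //.
  + by rewrite Nu => y /set1P ->; rewrite !inE eqxx !orbT.
  + by rewrite Nv => y /set1P ->; rewrite !inE eqxx !orbT.
- listing_adj (adjC hoffH) (adj_irr hoffH) (fat_nonadj hoffH).
- listing_fat.
Qed.

Lemma iso_XVII f g : N u = [set f; g] -> f != g -> N v = [set g] -> ~~ adj u v ->
  iso_named adj fat 4 2 es_XVII.
Proof.
move=> Nu fg Nv nadj_uv; have [fat_f adj_uf] := nbrs_mem Nu (set21 f g).
have [fat_g adj_ug] := nbrs_mem Nu (set22 f g).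
have [_ adj_vg] := nbrs_mem Nv (set11 g).
have nadj_vf : ~~ adj v f by apply: nbrs_nonadj Nv fat_f _; rewrite inE.
have [slim_u slim_v] := (two_slim_u, two_slim_v).
apply: (@iso_of_listing _ _ _ _ _ _ [:: u; v; f; g] u) => //.
- listing_uniq.
- apply: two_slim_complete; rewrite ?inE ?eqxx ?orbT //.
  + by rewrite Nu => y /set2P[] ->; rewrite !inE eqxx !orbT.
  + by rewrite Nv => y /set1P ->; rewrite !inE eqxx !orbT.
- listing_adj (adjC hoffH) (adj_irr hoffH) (fat_nonadj hoffH).
- listing_fat.
Qed.

Lemma iso_IV f g : N u = [set f] -> N v = [set g] -> g \notin N u -> adj u v ->
  iso_named adj fat 4 2 es_IV.
Proof.
move=> Nu Nv gNu adj_uv; have [fat_f adj_uf] := nbrs_mem Nu (set11 f).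
have [fat_g adj_vg] := nbrs_mem Nv (set11 g).
have gf : g != f by apply: contraNneq gNu => ->; rewrite Nu set11.
have nadj_vf : ~~ adj v f by apply: nbrs_nonadj Nv fat_f _; rewrite inE eq_sym.
have nadj_ug : ~~ adj u g by apply: contra gNu => adj_ug; apply/fat_nbrsP.
have [slim_u slim_v] := (two_slim_u, two_slim_v).
apply: (@iso_of_listing _ _ _ _ _ _ [:: u; v; f; g] u) => //.
- listing_uniq.
- apply: two_slim_complete; rewrite ?inE ?eqxx ?orbT //.
  + by rewrite Nu => y /set1P ->; rewrite !inE eqxx !orbT.
  + by rewrite Nv => y /set1P ->; rewrite !inE eqxx !orbT.
- listing_adj (adjC hoffH) (adj_irr hoffH) (fat_nonadj hoffH).
- listing_fat.
Qed.

Lemma iso_XVI f1 f2 g : N u = [set f1; f2] -> f1 != f2 -> N v = [set g] ->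
  g \notin N u -> adj u v -> iso_named adj fat 5 2 es_XVI.
Proof.
move=> Nu f12 Nv gNu adj_uv; have [fat_f1 adj_uf1] := nbrs_mem Nu (set21 f1 f2).
have [fat_f2 adj_uf2] := nbrs_mem Nu (set22 f1 f2).
have [fat_g adj_vg] := nbrs_mem Nv (set11 g).
have gf1 : g != f1 by apply: contraNneq gNu => ->; rewrite Nu set21.
have gf2 : g != f2 by apply: contraNneq gNu => ->; rewrite Nu set22.
have nadj_vf1 : ~~ adj v f1 by apply: nbrs_nonadj Nv fat_f1 _; rewrite inE eq_sym.
have nadj_vf2 : ~~ adj v f2 by apply: nbrs_nonadj Nv fat_f2 _; rewrite inE eq_sym.
have nadj_ug : ~~ adj u g by apply: contra gNu => adj_ug; apply/fat_nbrsP.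
have [slim_u slim_v] := (two_slim_u, two_slim_v).
apply: (@iso_of_listing _ _ _ _ _ _ [:: u; v; f1; f2; g] u) => //.
- listing_uniq.
- apply: two_slim_complete; rewrite ?inE ?eqxx ?orbT //.
  + by rewrite Nu => y /set2P[] ->; rewrite !inE eqxx !orbT.
  + by rewrite Nv => y /set1P ->; rewrite !inE eqxx !orbT.
- listing_adj (adjC hoffH) (adj_irr hoffH) (fat_nonadj hoffH).
- listing_fat.
Qed.

(* When v has a single fat neighbour g, the condition Q <> 0 says that
   g \in N(u) exactly when u, v are non-adjacent; the size of N(u) then
   singles out one of the four named graphs. *)
Lemma two_slim_iso_single g :
  N v = [set g] -> (0 < #|N u| <= 2)%N -> #|N u :&: N v| != adj u v ->
  [\/ iso_named adj fat 3 2 es_III, iso_named adj fat 4 2 es_IV,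
      iso_named adj fat 5 2 es_XVI | iso_named adj fat 4 2 es_XVII].
Proof.
move=> Nv Nu_12; rewrite Nv card_setI1.
have /orP[/cards1P [f Nu] | /cards2P [f1 [f2 [f12 Nu]]]] :
  (#|N u| == 1) || (#|N u| == 2) by apply/orP; lia.
- case gNu: (g \in N u); case adj_uv: (adj u v) => // _.
    apply: Or41; apply: (iso_III Nu); last by rewrite adj_uv.
    by move: gNu; rewrite Nu => /set1P <-.
  by apply: Or42; apply: (iso_IV Nu Nv); rewrite ?gNu.
- case gNu: (g \in N u); case adj_uv: (adj u v) => // _.
    apply: Or44; move: gNu; rewrite Nu => /set2P[] Eg; subst g.
      by apply: (@iso_XVII f2 f1); rewrite ?adj_uv // 1?eq_sym // Nu setUC.
    by apply: (iso_XVII Nu f12 Nv); rewrite adj_uv.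
  by apply: Or43; apply: (iso_XVI Nu f12 Nv); rewrite ?gNu.
Qed.

End TwoSlim.

(* With two slim vertices and |N(u)| + |N(v)| <= 3, one of them has a single
   fat neighbour; up to exchanging u and v, [two_slim_iso_single] applies. *)
Lemma two_slim_iso u v :
  u != v -> slim_set fat = [set u; v] -> is_fat_hoffman adj fat ->
  #|N u :&: N v| != adj u v -> (#|N u| + #|N v| <= 3)%N ->
  [\/ iso_named adj fat 3 2 es_III, iso_named adj fat 4 2 es_IV,
      iso_named adj fat 5 2 es_XVI | iso_named adj fat 4 2 es_XVII].
Proof.
move=> uv slimE fatH meet le3.
have Nu_pos := fat_nbrs_pos fatH (two_slim_u slimE).
have Nv_pos := fat_nbrs_pos fatH (two_slim_v slimE).
have [/cards1P[g Nv] | /cards1P[g Nu]] : #|N v| == 1 \/ #|N u| == 1.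
  by case: (leqP #|N v| 1) => Nv_le1; [left | right]; apply/eqP; lia.
- by apply: (two_slim_iso_single uv slimE Nv); lia.
- apply: (two_slim_iso_single (u := v) (v := u) _ _ Nu).
  + by rewrite eq_sym.
  + by rewrite setUC.
  + lia.
  + by rewrite setIC (adjC hoffH).
Qed.

End Classification.

Theorem mainTheorem15 (T : finType) (adj : rel T) (fat : pred T) :
  (0 < #|T|)%N ->
  is_hoffman adj fat ->
  is_fat_hoffman adj fat ->
  indecomposable adj fat ->
  lambda_min_ge adj fat (- 1 - tau)%R ->
  (#|slim_set fat| <= 2)%N ->
  iso_named adj fat 2 1 es_I \/
  iso_named adj fat 3 1 es_II \/
  iso_named adj fat 3 2 es_III \/
  iso_named adj fat 4 2 es_IV \/
  iso_named adj fat 5 2 es_XVI \/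
  iso_named adj fat 4 2 es_XVII.
Proof.
move=> T_pos hoffH fatH indec lam_ge slim_le2.
have [x0 slim_x0] := exists_slim hoffH T_pos.
have /orP[/cards1P[u slimE] | /cards2P[u [v [uv slimE]]]] :
    (#|slim_set fat| == 1) || (#|slim_set fat| == 2).
  have : (0 < #|slim_set fat|)%N by apply/card_gt0P; exists x0; rewrite inE.
  by move: slim_le2; case: #|_| => [|[|[|]]].
- have Nu_12 : (0 < #|fat_nbrs adj fat u| <= 2)%N.
    by rewrite (fat_nbrs_pos fatH (one_slim_u slimE))
      (one_slim_nbrs hoffH slimE lam_ge).
  by case: (one_slim_iso hoffH slimE Nu_12); tauto.
- have meet := two_slim_meet hoffH uv slimE indec.
  have le3 := two_slim_nbrs hoffH uv slimE lam_ge meet.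
  by case: (two_slim_iso hoffH uv slimE fatH meet le3); tauto.
Qed.
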